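(* Let $\mathcal{T}=[0,T_{max}]$, $\mathcal{T}_d,\mathcal{T}_a\subseteq\mathcal{T}$ compact, $\mathcal{X}=[X_{min},X_{max}]$, and $m$ a probability measure on $\mathcal{X}\times\mathcal{T}_a$. For every $G\in\mathbb{R}^+$, the set $\mathcal{P}_{m,G}$ is a closed subset of the space $\mathcal{P}(\mathcal{T}_d\times\mathcal{X})$ of Borel probability measures on $\mathcal{T}_d\times\mathcal{X}$, equipped with the topology of weak convergence of measures.
   Context: $\lambda_2$ denotes Lebesgue measure on $\mathbb{R}^2$. $\mathcal{P}_{m,G}$ is the set of all $F\in\mathcal{P}(\mathcal{T}_d\times\mathcal{X})$ such that (i) $F(B)\le G\,\lambda_2(B)$ for every Borel set $B\subseteq\mathcal{T}_d\times\mathcal{X}$, and (ii) $F(\mathcal{T}_d\times B)=m(B\times\mathcal{T}_a)$ for every Borel set $B\subseteq\mathcal{X}$. *)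

From HB Require Import structures.
From mathcomp Require Import all_boot all_order all_algebra.
From mathcomp Require Import all_classical all_reals all_analysis.
Set Implicit Arguments. Unset Strict Implicit. Unset Printing Implicit Defensive.
Import Order.TTheory GRing.Theory Num.Theory.
Import numFieldNormedType.Exports.
Local Open Scope classical_set_scope.
Local Open Scope ring_scope.

(* Points of R^2 are pairs (first coordinate, second coordinate); the product
   sigma-algebra on R * R is the Borel sigma-algebra of R^2. *)
Definition R2 (R : realType) := (measurableTypeR R * measurableTypeR R)%type.

Definition lambda2 (R : realType) : set (R2 R) -> \bar R :=
  ((@lebesgue_measure R) \x (@lebesgue_measure R))%E.

(* A Borel probability measure on a Borel set K of R^2 is represented by a
   probability measure on R^2 concentrated on K (F K = 1). *)
Definition prob_on (R : realType) (K : set (R2 R)) (F : probability (R2 R) R) :=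
  F K = 1%E.

Definition PmG (R : realType) (Td Ta X : set R) (m : probability (R2 R) R)
    (G : R) (F : probability (R2 R) R) : Prop :=
  prob_on (Td `*` X) F /\
  (forall B : set (R2 R), measurable B -> B `<=` Td `*` X ->
     (F B <= G%:E * lambda2 B)%E) /\
  (forall B : set R, measurable B -> B `<=` X ->
     F (Td `*` B) = m (B `*` Ta)).

(* Weak topology on P(K) (K compact): the topology of weak convergence of
   measures, i.e. the coarsest topology making F |-> \int_K f dF continuous
   for every continuous f : K -> R.  Its basic open neighbourhoods of F are
   { F' | |\int_K f_i dF' - \int_K f_i dF| < eps, i < n }.
   [weak_closure K P F] says that every such basic neighbourhood of F meets P,
   i.e. F lies in the weak closure of P. *)
Definition weak_closure (R : realType) (K : set (R2 R))
    (P : probability (R2 R) R -> Prop) (F : probability (R2 R) R) : Prop :=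
  forall (n : nat) (f : 'I_n -> R2 R -> R) (eps : R),
    (forall i, {within K, continuous (f i)}) -> 0 < eps ->
    exists F' : probability (R2 R) R,
      prob_on K F' /\ P F' /\
      forall i, (`| \int[F']_(x in K) (f i x)%:E - \int[F]_(x in K) (f i x)%:E |
                 < eps%:E)%E.

Definition weakly_closed (R : realType) (K : set (R2 R))
    (P : probability (R2 R) R -> Prop) : Prop :=
  (forall F, P F -> prob_on K F) /\
  forall F : probability (R2 R) R, prob_on K F -> weak_closure K P F -> P F.

From HB Require Import structures.
From mathcomp Require Import all_boot all_order all_algebra.
From mathcomp Require Import all_classical all_reals all_analysis.
From mathcomp Require Import measurable_realfun lra.
Import Order.TTheory GRing.Theory Num.Theory.
Import numFieldNormedType.Exports.
Local Open Scope classical_set_scope.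
Local Open Scope ring_scope.

(* Let F lie in the weak closure of P_{m,G}.  If f is a continuous cutoff with
   1_C <= f <= 1_D, testing against f gives, for some F' in P_{m,G},
   F(C) <= F'(D) + eps and F'(C) <= F(D) + eps.  With C and D closed and open
   approximations (from inside and outside) of a half-open rectangle or strip,
   letting them shrink shows that F <= G lambda_2 on half-open rectangles and
   that the second marginal of F equals the first marginal of m on half-open
   intervals.  A monotone class argument over the ring generated by half-open
   rectangles extends the density bound to all Borel sets, and uniqueness of
   measures agreeing on intervals extends the marginal identity. *)

Section rectangles.
Context {T1 T2 : Type}.
Implicit Types (A B : set T1) (C D : set T2).

Lemma setDXl A B C : (A `\` B) `*` C = A `*` C `\` B `*` C.
Proof.
apply/seteqP; split => -[x y] /=; first by move=> [[? ?] ?]; split=> // -[].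
by move=> [[? ?] nBC]; split=> //; split=> // Bx; apply: nBC.
Qed.

Lemma setDXr A C D : A `*` (C `\` D) = A `*` C `\` A `*` D.
Proof.
apply/seteqP; split => -[x y] /=; first by move=> [? [? ?]]; split=> // -[].
by move=> [[? ?] nAD]; split=> //; split=> // Dy; apply: nAD.
Qed.

Lemma setDXX A B C D :
  A `*` C `\` B `*` D = (A `\` B) `*` C `|` (A `&` B) `*` (C `\` D).
Proof.
apply/seteqP; split => -[x y] /=.
  move=> [[Ax Cy] nBD]; have [Bx|nBx] := pselect (B x); last by left.
  by right; split=> //; split=> // Dy; apply: nBD.
by move=> [[[Ax nBx] Cy]|[[Ax Bx] [Cy nDy]]]; split=> // -[].
Qed.

Definition rectangles (G1 : set (set T1)) (G2 : set (set T2)) :=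
  [set A `*` C | A in G1 & C in G2].

Context {G1 : set (set T1)} {G2 : set (set T2)}.

Lemma rectangles0 : G1 set0 -> G2 set0 -> rectangles G1 G2 set0.
Proof. by move=> G10 G20; exists set0 => //; exists set0; rewrite ?set0X. Qed.

Lemma rectanglesI : setI_closed G1 -> setI_closed G2 ->
  setI_closed (rectangles G1 G2).
Proof.
move=> G1I G2I _ _ [A G1A [C G2C <-]] [B G1B [D G2D <-]].
by exists (A `&` B); [exact: G1I|exists (C `&` D); [exact: G2I|rewrite setXI]].
Qed.

Lemma rectanglesD : setI_closed G1 -> semi_setD_closed G1 ->
  semi_setD_closed G2 -> semi_setD_closed (rectangles G1 G2).
Proof.
move=> G1I G1D G2D _ _ [A G1A [C G2C <-]] [B G1B [D G2D' <-]].
have [P [finP PG1 ABE trivP]] := G1D _ _ G1A G1B.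
have [Q [finQ QG2 CDE trivQ]] := G2D _ _ G2C G2D'.
exists ([set X `*` C | X in P] `|` [set (A `&` B) `*` Y | Y in Q]); split.
- by rewrite finite_setU; split; exact: finite_image.
- move=> _ [[X PX <-]|[Y QY <-]]; first by exists X; [exact: PG1|exists C].
  by exists (A `&` B); [exact: G1I|exists Y => //; exact: QG2].
- rewrite setDXX ABE CDE bigcup_setU !bigcup_image.
  by rewrite setX_bigcupl setX_bigcupr.
- have inAB X x : P X -> X x -> (A `\` B) x.
    by move=> PX Xx; rewrite ABE; exists X.
  move=> _ _ [[X PX <-]|[Y QY <-]] [[X' PX' <-]|[Y' QY' <-]] [[x y]] /=.
  + by move=> [[Xx _] [X'x _]]; rewrite (trivP X X') //; exists x.
  + by move=> [[Xx _] [[_ Bx] _]]; have [] := inAB _ _ PX Xx.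
  + by move=> [[[_ Bx] _] [X'x _]]; have [] := inAB _ _ PX' X'x.
  + by move=> [[_ Yy] [_ Y'y]]; rewrite (trivQ Y Y') //; exists y.
Qed.

End rectangles.

Section half_open_rectangles.
Variable R : realType.

(* A copy of R * R carrying the semiring of half-open rectangles, so that its
   SetRing (finite disjoint unions of rectangles) is available. *)
Definition ocrect_type : Type := (R * R)%type.
HB.instance Definition _ := Pointed.on ocrect_type.

Definition ocrect : set (set ocrect_type) := rectangles (@ocitv R) (@ocitv R).

Definition ocrect_display : measure_display. Proof. exact. Qed.
HB.instance Definition _ := @isSemiRingOfSets.Build ocrect_display ocrect_type
  ocrect (rectangles0 (@ocitv0 R) (@ocitv0 R))
  (rectanglesI (@ocitvI R) (@ocitvI R))
  (rectanglesD (@ocitvI R) (@ocitvD R) (@ocitvD R)).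

Lemma ocrect_measurable (E : set (R2 R)) : ocrect E -> measurable E.
Proof.
by move=> [I oI [J oJ <-]]; apply: measurableX; exact: sub_sigma_algebra.
Qed.

Lemma measurable_sub_sigma_ring (T : Type) (S : set (set T))
    (phi : set R -> set T) : sigma_ring S ->
  (forall A, phi (setT `\` A) = phi setT `\` phi A) ->
  (forall F : (set R)^nat, phi (\bigcup_n F n) = \bigcup_n phi (F n)) ->
  (forall I, ocitv I -> S (phi I)) ->
  forall A, measurable (A : set (measurableTypeR R)) -> S (phi A).
Proof.
move=> [_ SD SU] phiC phiU Sphi.
have ST : S (phi setT).
  rewrite -(bigcup_itvT false false) phiU; apply: SU => n; exact/Sphi/is_ocitv.
have : sigma_algebra setT [set A | S (phi A)].
  split => /=; first exact/Sphi/ocitv0.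
  - by move=> A SA; rewrite phiC; exact: SD.
  - by move=> F SF; rewrite phiU; exact: SU.
by move=> sigS A mA; apply: (smallest_sub sigS _ mA) => I /Sphi.
Qed.

Lemma measurable_sub_g_sigma_ring_ocrect (E : set (R2 R)) :
  measurable E -> <<sr ocrect>> E.
Proof.
have SR := smallest_sigma_ring ocrect.
have SX (A B : set (measurableTypeR R)) :
    measurable A -> measurable B -> <<sr ocrect>> (A `*` B).
  move=> mA; apply: (@measurable_sub_sigma_ring _ _ (fun B' => A `*` B') SR).
  - by move=> B'; rewrite setDXr.
  - by move=> F; rewrite setX_bigcupr.
  move=> J oJ; move: A mA.
  apply: (@measurable_sub_sigma_ring _ _ (fun A' => A' `*` J) SR).
  - by move=> A'; rewrite setDXl.
  - by move=> F; rewrite setX_bigcupl.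
  by move=> I oI; apply: sub_gen_smallest; exists I => //; exists J.
have : sigma_algebra setT <<sr ocrect>>.
  have [S0 SD SU] := SR; split => //; move=> A SA; apply: SD => //.
  by rewrite -setXTT; apply: SX.
move=> sigS; rewrite measurable_prod_measurableType => mE.
by apply: (smallest_sub sigS _ mE) => _ [A mA [B mB <-]]; exact: SX.
Qed.

End half_open_rectangles.

Section measure_le.
Local Open Scope ereal_scope.
Context {d : measure_display} {T : measurableType d} {R : realType}.
Variables mu nu : {measure set T -> \bar R}.

Lemma le_measure_bigcup_bigcap (A B : (set T)^nat) :
  (forall n, measurable (A n)) -> (forall n, measurable (B n)) ->
  nondecreasing_seq A -> nonincreasing_seq B -> nu (B 0%N) < +oo ->
  (forall n, mu (A n) <= nu (B n)) -> mu (\bigcup_n A n) <= nu (\bigcap_n B n).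
Proof.
move=> mA mB ndA niB nuB0 muAB.
have muA := nondecreasing_cvg_mu (mu := mu) mA (bigcupT_measurable _ mA) ndA.
have nuB := nonincreasing_cvg_mu nuB0 mB (bigcapT_measurable mB) niB.
refine (lee_cvg_to muA nuB _); exact: nearW.
Qed.

Lemma monotone_measure_le : mu setT < +oo -> nu setT < +oo ->
  monotone [set E | measurable E /\ mu E <= nu E].
Proof.
move=> muT nuT; have lty (m : {measure set T -> \bar R}) E :
    m setT < +oo -> measurable E -> m E < +oo.
  by move=> mT mE; apply: le_lt_trans mT; apply: le_measure; rewrite ?inE.
split=> F monoF GF; have mF n : measurable (F n) by case: (GF n).
- have mU := bigcupT_measurable _ mF; split => //.
  apply: lee_cvg_to (nondecreasing_cvg_mu mF mU monoF)
    (nondecreasing_cvg_mu mF mU monoF) _.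
  by apply: nearW => n; case: (GF n).
- have mI := bigcapT_measurable mF; split => //.
  apply: lee_cvg_to (nonincreasing_cvg_mu (lty _ _ muT (mF 0%N)) mF mI monoF)
    (nonincreasing_cvg_mu (lty _ _ nuT (mF 0%N)) mF mI monoF) _.
  by apply: nearW => n; case: (GF n).
Qed.

End measure_le.

Lemma le_measure_ocrect {R : realType} {mu nu : {measure set (R2 R) -> \bar R}} :
  (mu setT < +oo)%E -> (nu setT < +oo)%E ->
  (forall E, ocrect R E -> mu E <= nu E)%E ->
  forall E, measurable E -> (mu E <= nu E)%E.
Proof.
move=> muT nuT le_rect.
pose ring := [set E : set (R2 R) |
  measurable (E : set (SetRing.type (ocrect_type R)))].
have ring_le : ring `<=` [set E | measurable E /\ (mu E <= nu E)%E].
  move=> E; rewrite /ring /= SetRing.ring_measurableE.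
  move=> -[D [-> DE Dfin Dtriv]].
  have mD X : D X -> measurable (X : set (R2 R)).
    by move/DE; exact: ocrect_measurable.
  split; first exact: fin_bigcup_measurable.
  rewrite !measure_fin_bigcup //; apply: lee_fsum => // X /DE; exact: le_rect.
have setring_ring : setring ring.
  split; first exact: measurable0.
  - by move=> *; exact: measurableU.
  - by move=> *; exact: measurableD.
have ring_sub := monotone_setring_sub_g_sigma_ring
  (monotone_measure_le mu nu muT nuT) setring_ring ring_le.
have ocrect_sub : <<sr ocrect R>> `<=` <<sr ring>>.
  apply: sub_smallest2r; first exact: smallest_sigma_ring.
  by move=> E; exact: SetRing.measurable_subring.
by move=> E /measurable_sub_g_sigma_ring_ocrect /ocrect_sub /ring_sub [].
Qed.

Section tent.
Context {R : realType}.
Implicit Types a b e t : R.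

Definition tent a b e : R -> R :=
  cst 0 \max (cst 1 \min ((fun t => (t - a) / e) \min (fun t => (b + e - t) / e))).

Lemma continuous_tent a b e : continuous (tent a b e).
Proof.
move=> t; apply: continuous_max; first exact: cvg_cst.
apply: continuous_min; first exact: cvg_cst.
apply: continuous_min; apply: continuousM; try exact: cvg_cst.
  by apply: cvgB; [exact: cvg_id|exact: cvg_cst].
by apply: cvgB; [exact: cvg_cst|exact: cvg_id].
Qed.

Lemma measurable_tent a b e : measurable_fun setT (tent a b e).
Proof. exact: continuous_measurable_fun (continuous_tent a b e). Qed.

Lemma tent_ge0 a b e t : 0 <= tent a b e t.
Proof. by rewrite le_max lexx. Qed.

Lemma tent_le1 a b e t : tent a b e t <= 1.
Proof. by rewrite ge_max ler01 ge_min lexx. Qed.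

Lemma tent_eq1 {a b e t} : 0 < e -> `[a + e, b]%classic t -> tent a b e t = 1.
Proof.
move=> e0; rewrite /= in_itv /= => /andP[aet tb].
have t_a : 1 <= (t - a) / e by rewrite ler_pdivlMr // mul1r; lra.
have b_t : 1 <= (b + e - t) / e by rewrite ler_pdivlMr // mul1r; lra.
by rewrite /tent /= (min_idPl (_ : 1 <= _)) ?le_min ?t_a ?b_t // (max_idPr ler01).
Qed.

Lemma tent_eq0 {a b e t} : 0 < e -> ~ `]a, b + e]%classic t -> tent a b e t = 0.
Proof.
move=> e0 tD; rewrite /tent /=; apply/max_idPl; rewrite !ge_min.
have [ta|ta] := leP t a.
  by rewrite pmulr_lle0 ?invr_gt0 // subr_le0 ta orbT.
have bet : b + e <= t.
  by rewrite leNgt; apply/negP => tbe; apply: tD; rewrite /= in_itv /= ta ltW.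
apply/orP; right; apply/orP; right.
by rewrite pmulr_lle0 ?invr_gt0 // subr_le0.
Qed.

End tent.

Local Notation inner a b n := (`[a + n.+1%:R^-1, b]%classic).
Local Notation outer a b n := (`]a, b + n.+1%:R^-1]%classic).

Section shrinking_intervals.
Variable R : realType.
Implicit Types a b c d : R.

Lemma lef_invS (n m : nat) : (n <= m)%N -> m.+1%:R^-1 <= n.+1%:R^-1 :> R.
Proof. by move=> nm; rewrite lef_pV2 ?posrE // ler_nat ltnS. Qed.

Lemma nondecreasing_itv_cc a b :
  nondecreasing_seq (fun n => inner a b n).
Proof.
move=> n m nm; apply/subsetPset => x /=; rewrite !in_itv /= => /andP[aex ->].
by rewrite andbT (le_trans _ aex) // lerD2l lef_invS.
Qed.

Lemma nonincreasing_itv_oc a b :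
  nonincreasing_seq (fun n => outer a b n).
Proof.
move=> n m nm; apply/subsetPset => x /=; rewrite !in_itv /= => /andP[-> xbe].
by rewrite (le_trans xbe) // lerD2l lef_invS.
Qed.

Lemma itv_oc_bigcup a b : `]a, b]%classic = \bigcup_n inner a b n.
Proof. exact: itv_open_bnd_bigcup. Qed.

Lemma itv_oc_bigcap a b : `]a, b]%classic = \bigcap_n outer a b n.
Proof.
apply/seteqP; split => x /=.
  rewrite in_itv /= => /andP[ax xb] n _.
  by rewrite /= in_itv /= ax (le_trans xb) // lerDl.
move=> xbe; rewrite in_itv /=; have /= := xbe 0%N I.
rewrite in_itv /= => /andP[-> _] /=.
have : `]-oo, b]%classic x.
  by rewrite (itvNycEbigcap false) => n _ /=; have /andP[] := xbe n I.
by rewrite /= in_itv.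
Qed.

Lemma setX_bigcup_nondecreasing (T1 T2 : Type) (A : (set T1)^nat)
    (B : (set T2)^nat) : nondecreasing_seq A -> nondecreasing_seq B ->
  \bigcup_n A n `*` \bigcup_n B n = \bigcup_n (A n `*` B n).
Proof.
move=> ndA ndB; apply/seteqP; split => -[x y] /=; last first.
  by move=> [n _ [Ax By]]; split; exists n.
move=> [[i _ Ax] [j _ By]]; exists (maxn i j) => //; split.
  by have /subsetPset := ndA _ _ (leq_maxl i j); apply.
by have /subsetPset := ndB _ _ (leq_maxr i j); apply.
Qed.

Lemma setX_bigcap (T1 T2 : Type) (A : (set T1)^nat) (B : (set T2)^nat) :
  \bigcap_n A n `*` \bigcap_n B n = \bigcap_n (A n `*` B n).
Proof.
apply/seteqP; split => -[x y] /=.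
  by move=> [Ax By] n _; split; [exact: Ax|exact: By].
by move=> AB; split => n _; have [] := AB n I.
Qed.

Lemma le_measure_itv_oc (mu nu : {measure set (measurableTypeR R) -> \bar R}) a b :
  (nu setT < +oo)%E -> (forall n, mu (inner a b n) <= nu (outer a b n))%E ->
  (mu `]a, b]%classic <= nu `]a, b]%classic)%E.
Proof.
move=> nuT le_n; rewrite {1}itv_oc_bigcup {1}itv_oc_bigcap.
apply: le_measure_bigcup_bigcap => //.
- exact: nondecreasing_itv_cc.
- exact: nonincreasing_itv_oc.
- by apply: le_lt_trans nuT; apply: le_measure; rewrite ?inE.
Qed.

Lemma le_measure_rect_oc (mu nu : {measure set (R2 R) -> \bar R}) a b c d :
  (nu setT < +oo)%E ->
  (forall n, mu (inner a b n `*` inner c d n) <=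
             nu (outer a b n `*` outer c d n))%E ->
  (mu (`]a, b]%classic `*` `]c, d]%classic) <=
   nu (`]a, b]%classic `*` `]c, d]%classic))%E.
Proof.
move=> nuT le_n.
rewrite {1}itv_oc_bigcup {1}(itv_oc_bigcup c) setX_bigcup_nondecreasing;
  try exact: nondecreasing_itv_cc.
rewrite itv_oc_bigcap (itv_oc_bigcap c) setX_bigcap.
have mX (I J : interval R) : measurable ([set` I] `*` [set` J] : set (R2 R)).
  by apply: measurableX; exact: measurable_itv.
apply: le_measure_bigcup_bigcap => //.
- move=> n m nm; apply/subsetPset.
  by apply: setSX; apply/subsetPset; exact: nondecreasing_itv_cc.
- move=> n m nm; apply/subsetPset.
  by apply: setSX; apply/subsetPset; exact: nonincreasing_itv_oc.
- by apply: le_lt_trans nuT; apply: le_measure; rewrite ?inE.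
Qed.

End shrinking_intervals.

Definition cutoff {R : realType} (C D : set (R2 R)) (f : R2 R -> R) :=
  [/\ continuous f, measurable_fun setT f, (forall x, 0 <= f x <= 1),
      (forall x, C x -> f x = 1) & (forall x, ~ D x -> f x = 0)].

Section cutoff.
Context {R : realType} {C D : set (R2 R)} {f : R2 R -> R}.

Lemma cutoff_ge0 x : cutoff C D f -> 0 <= f x.
Proof. by move=> [_ _ f01 _ _]; have /andP[] := f01 x. Qed.

Lemma cutoff_le1 x : cutoff C D f -> f x <= 1.
Proof. by move=> [_ _ f01 _ _]; have /andP[] := f01 x. Qed.

End cutoff.

Section weak_closure_bounds.
Context {R : realType}.
Local Open Scope ereal_scope.

Lemma lte_dist_leD {x y : \bar R} {e : R} : x \is a fin_num -> y \is a fin_num ->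
  `|x - y| < e%:E -> y <= x + e%:E /\ x <= y + e%:E.
Proof.
move: x y => [x| |] [y| |] //= _ _; rewrite lte_fin -!EFinD !lee_fin.
by rewrite ltr_distlC => /andP[/ltW + /ltW]; rewrite lerBlDr.
Qed.

Context {K : set (R2 R)} (mK : measurable K).

Lemma prob_on_setI {F : probability (R2 R) R} {A} : prob_on K F -> measurable A ->
  F A = F (A `&` K).
Proof.
move=> FK mA; rewrite (measureDI F mA mK) -[X in X + _]/(F (A `\` K)).
suff -> : F (A `\` K) = 0 by rewrite add0e.
apply/eqP; rewrite eq_le measure_ge0 andbT.
have <- : F (~` K) = 0 by rewrite probability_setC // FK subee.
apply: le_measure; rewrite ?inE; first exact: measurableD.
  by apply: measurableC.
exact: subIsetr.
Qed.

Lemma cutoff_integral_fin_num (Q : probability (R2 R) R) {C D f} : cutoff C D f ->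
  \int[Q]_(x in K) (f x)%:E \is a fin_num.
Proof.
move=> cf; have [_ mf _ _ _] := cf.
have mfK := measurable_funS measurableT (@subsetT _ K) mf.
have f0 x : K x -> 0 <= (f x)%:E by rewrite lee_fin (cutoff_ge0 _ cf).
rewrite ge0_fin_numE; last exact: integral_ge0.
apply: (@le_lt_trans _ _ (\int[Q]_(x in K) cst 1 x)).
  apply: ge0_le_integral => //; first exact/measurable_EFinP.
  by move=> x _; rewrite lee_fin (cutoff_le1 _ cf).
by rewrite integral_cst // mul1e (le_lt_trans (probability_le1 Q mK)) ?ltry.
Qed.

Lemma cutoff_integral_bounds (Q : probability (R2 R) R) {C D f} :
  measurable C -> measurable D -> cutoff C D f ->
  Q (C `&` K) <= \int[Q]_(x in K) (f x)%:E <= Q (D `&` K).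
Proof.
move=> mC mD cf; have [_ mf _ fC fD] := cf.
have mfK := measurable_funS measurableT (@subsetT _ K) mf.
rewrite -!integral_indic //; apply/andP; split; apply: ge0_le_integral => //.
- exact/measurable_EFinP/measurable_indic.
- exact/measurable_EFinP.
- move=> x _; rewrite indicE lee_fin.
  by have [/set_mem/fC ->|_] := boolP (x \in C); rewrite ?(cutoff_ge0 _ cf).
- by move=> x _; rewrite lee_fin (cutoff_ge0 _ cf).
- exact/measurable_EFinP.
- exact/measurable_EFinP/measurable_indic.
- move=> x _; rewrite indicE lee_fin.
  have [_|/negP nDx] := boolP (x \in D); first exact: cutoff_le1 cf.
  by rewrite fD // => /mem_set.
Qed.

Lemma weak_closure_cutoff_le {P : probability (R2 R) R -> Prop} {F C D f eps} :
  prob_on K F -> weak_closure K P F -> measurable C -> measurable D ->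
  cutoff C D f -> (0 < eps)%R -> exists F', [/\ prob_on K F', P F',
    F C <= F' D + eps%:E & F' C <= F D + eps%:E].
Proof.
move=> FK FP mC mD cf eps0; have [fc _ _ _ _] := cf.
have [F' [F'K [PF' dist]]] :=
  FP 1%N (fun _ => f) eps (fun _ => continuous_subspaceT fc) eps0.
have [le_FF' le_F'F] := lte_dist_leD (cutoff_integral_fin_num F' cf)
  (cutoff_integral_fin_num F cf) (dist ord0).
have /andP[CF DF] := cutoff_integral_bounds F mC mD cf.
have /andP[CF' DF'] := cutoff_integral_bounds F' mC mD cf.
exists F'; rewrite (prob_on_setI FK mC) (prob_on_setI FK mD).
rewrite (prob_on_setI F'K mC) (prob_on_setI F'K mD); split => //.
- by rewrite (le_trans CF) // (le_trans le_FF') // leeD2r.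
- by rewrite (le_trans CF') // (le_trans le_F'F) // leeD2r.
Qed.

End weak_closure_bounds.

Section cutoffs.
Context {R : realType}.
Implicit Types a b c d e : R.

Lemma cutoff_rect a b c d {e} : 0 < e ->
  cutoff (`[a + e, b]%classic `*` `[c + e, d]%classic)
         (`]a, b + e]%classic `*` `]c, d + e]%classic)
         (fun x : R2 R => tent a b e x.1 * tent c d e x.2).
Proof.
move=> e0; split.
- move=> x; apply: (@continuousM _ _ (tent a b e \o fst) (tent c d e \o snd)).
    by apply: continuous_comp; [exact: cvg_fst|exact: continuous_tent].
  by apply: continuous_comp; [exact: cvg_snd|exact: continuous_tent].
- apply: measurable_funM.
    by apply: measurableT_comp; [exact: measurable_tent|exact: measurable_fst].
  by apply: measurableT_comp; [exact: measurable_tent|exact: measurable_snd].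
- by move=> x; rewrite mulr_ge0 ?mulr_ile1 ?tent_ge0 ?tent_le1.
- by move=> x [/(tent_eq1 e0) -> /(tent_eq1 e0) ->]; rewrite mulr1.
- move=> x; have [/(tent_eq0 e0) ->|?] := pselect (~ `]a, b + e]%classic x.1).
    by rewrite mul0r.
  have [/(tent_eq0 e0) ->|?] := pselect (~ `]c, d + e]%classic x.2).
    by rewrite mulr0.
  by move=> []; split; apply: contrapT.
Qed.

Lemma cutoff_strip a b {e} : 0 < e ->
  cutoff (snd @^-1` `[a + e, b]%classic) (snd @^-1` `]a, b + e]%classic)
         (fun x : R2 R => tent a b e x.2).
Proof.
move=> e0; split.
- by move=> x; apply: continuous_comp; [exact: cvg_snd|exact: continuous_tent].
- by apply: measurableT_comp; [exact: measurable_tent|exact: measurable_snd].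
- by move=> x; rewrite tent_ge0 tent_le1.
- by move=> x /(tent_eq1 e0).
- by move=> x /(tent_eq0 e0).
Qed.

End cutoffs.

Definition density_bounded {R : realType} (K : set (R2 R)) (G : R)
    (F : probability (R2 R) R) :=
  forall B, measurable B -> B `<=` K -> (F B <= G%:E * lambda2 B)%E.

Section weak_closure_density.
Context {R : realType}.
Local Open Scope ereal_scope.

Lemma lambda2_bounded_lty {a b c d : R} {K : set (R2 R)} : measurable K ->
  K `<=` `[a, b]%classic `*` `[c, d]%classic -> lambda2 K < +oo.
Proof.
move=> mK sK; rewrite /lambda2.
apply: (@le_lt_trans _ _ (lambda2 (`[a, b]%classic `*` `[c, d]%classic))).
  by apply: le_measure; rewrite ?inE //; apply: measurableX; exact: measurable_itv.
have itv_lty (x y : R) : lebesgue_measure `[x, y]%classic < +oo.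
  by rewrite lebesgue_measure_itv; case: ifP => _; rewrite ?ltry.
rewrite /lambda2 product_measure1E; try exact: measurable_itv.
by rewrite lte_mul_pinfty ?measure_ge0 ?ge0_fin_numE ?measure_ge0 ?itv_lty.
Qed.

Context {K : set (R2 R)} (mK : measurable K) {G : R} (G0 : (0 < G)%R).

Lemma weak_closure_density_bounded {P : probability (R2 R) R -> Prop} {F} :
  lambda2 K < +oo -> (forall F', P F' -> density_bounded K G F') ->
  prob_on K F -> weak_closure K P F -> density_bounded K G F.
Proof.
move=> l2K Pbounded FK FP.
pose l2 : {measure set (R2 R) -> \bar R} := lebesgue_measure \x lebesgue_measure.
pose mu := mscale (NngNum (ltW G0)) (mrestr l2 mK).
have muE A : mu A = G%:E * lambda2 (A `&` K) by [].
have muT : mu setT < +oo.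
  by rewrite muE setTI lte_mul_pinfty // ?lee_fin ?(ltW G0).
have le_rect E : ocrect R E -> F E <= mu E.
  move=> [_ [[a b] _ <-] [_ [[c d] _ <-] <-]] /=.
  apply: le_measure_rect_oc => // n.
  have en0 : (0 < n.+1%:R^-1 :> R)%R by rewrite invr_gt0.
  have mX (I J : interval R) : measurable ([set` I] `*` [set` J] : set (R2 R)).
    by apply: measurableX; exact: measurable_itv.
  apply/lee_addgt0Pr => eps eps0.
  have [F' [F'K PF' le_FF' _]] := weak_closure_cutoff_le mK FK FP
    (mX _ _) (mX _ _) (cutoff_rect a b c d en0) eps0.
  rewrite (prob_on_setI mK F'K (mX _ _)) in le_FF'.
  rewrite (le_trans le_FF') // leeD2r //.
  by apply: (Pbounded _ PF'); [exact: measurableI|exact: subIsetr].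
have FT : F setT < +oo by rewrite probability_setT ltry.
move=> B mB BK; rewrite -[in leRHS](setIidl BK).
exact: le_measure_ocrect FT muT le_rect _ mB.
Qed.

End weak_closure_density.

HB.instance Definition _ (R : realType) := @isMeasurableFun.Build _ _
  (R2 R) (measurableTypeR R) fst (@measurable_fst _ _ _ _).
HB.instance Definition _ (R : realType) := @isMeasurableFun.Build _ _
  (R2 R) (measurableTypeR R) snd (@measurable_snd _ _ _ _).

Definition marginal_agrees {R : realType} (Td X Ta : set R)
    (m F : probability (R2 R) R) :=
  forall B, measurable B -> B `<=` X -> F (Td `*` B) = m (B `*` Ta).

Section weak_closure_marginal.
Context {R : realType}.
Local Open Scope ereal_scope.

Lemma prob_on_preimage_fst {A B I : set R} {Q : probability (R2 R) R} :
  measurable A -> measurable B -> measurable I -> prob_on (A `*` B) Q ->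
  Q (fst @^-1` I) = Q ((I `&` A) `*` B).
Proof.
move=> mA mB mI QAB; rewrite (prob_on_setI (measurableX mA mB) QAB).
  by rewrite -setXT -setXI setTI.
by rewrite -setXT; apply: measurableX.
Qed.

Lemma prob_on_preimage_snd {A B I : set R} {Q : probability (R2 R) R} :
  measurable A -> measurable B -> measurable I -> prob_on (A `*` B) Q ->
  Q (snd @^-1` I) = Q (A `*` (I `&` B)).
Proof.
move=> mA mB mI QAB; rewrite (prob_on_setI (measurableX mA mB) QAB).
  by rewrite -setTX -setXI setTI.
by rewrite -setTX; apply: measurableX.
Qed.

Context {Td X Ta : set R} {m : probability (R2 R) R}.

Lemma weak_closure_marginal_agrees {P : probability (R2 R) R -> Prop} {F} :
  measurable Td -> measurable X -> measurable Ta -> prob_on (X `*` Ta) m ->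
  (forall F', P F' -> marginal_agrees Td X Ta m F') ->
  prob_on (Td `*` X) F -> weak_closure (Td `*` X) P F ->
  marginal_agrees Td X Ta m F.
Proof.
move=> mTd mX mTa mXTa Pagrees FK FP.
have mK := measurableX mTd mX.
pose nu1 := distribution F snd; pose nu2 := distribution m fst.
have nu2E I : measurable I -> nu2 I = m ((I `&` X) `*` Ta).
  move=> mI; rewrite /nu2 /distribution /pushforward.
  exact: prob_on_preimage_fst mX mTa mI mXTa.
have agrees_nu2 Q : prob_on (Td `*` X) Q -> marginal_agrees Td X Ta m Q ->
    forall I, measurable I -> Q (snd @^-1` I) = nu2 I.
  move=> QK Qagrees I mI; rewrite (prob_on_preimage_snd mTd mX mI QK) nu2E //.
  by apply: Qagrees; [exact: measurableI|exact: subIsetr].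
have msnd (I : set R) : measurable I -> measurable (snd @^-1` I : set (R2 R)).
  by move=> mI; rewrite -setTX; apply: measurableX.
have le_strip a b n : nu1 (inner a b n) <= nu2 (outer a b n) /\
    nu2 (inner a b n) <= nu1 (outer a b n).
  have en0 : (0 < n.+1%:R^-1 :> R)%R by rewrite invr_gt0.
  split; apply/lee_addgt0Pr => eps eps0;
    have [F' [F'K PF' le_FF' le_F'F]] := weak_closure_cutoff_le mK FK FP
      (msnd _ (measurable_itv _)) (msnd _ (measurable_itv _))
      (cutoff_strip a b en0) eps0;
    by rewrite -(agrees_nu2 F' F'K (Pagrees _ PF')).
have nu1T : nu1 setT < +oo by rewrite /nu1 probability_setT ltry.
have nu2T : nu2 setT < +oo by rewrite /nu2 probability_setT ltry.
have nu12 (A : set (measurableTypeR R)) : measurable A -> nu1 A = nu2 A.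
  apply: (@measure_unique _ _ (measurableTypeR R) (@ocitv R)
    (fun n => `]- n%:R, n%:R]%classic)%R erefl (@ocitvI R)) => //.
  - by move=> n; exact: is_ocitv.
  - exact: bigcup_itvT.
  - move=> _ [[a b] _ <-]; apply/eqP; rewrite eq_le.
    by rewrite !le_measure_itv_oc // => n; have [] := le_strip a b n.
  - by move=> n; apply: le_lt_trans nu1T; apply: le_measure; rewrite ?inE.
move=> B mB BX.
rewrite -(setIidl BX) -nu2E // -nu12 // /nu1 /distribution /pushforward.
by rewrite (prob_on_preimage_snd mTd mX mB FK).
Qed.

End weak_closure_marginal.

Theorem proposition3 (R : realType) (Tmax Xmin Xmax : R) (Td Ta : set R)
    (hTmax : 0 <= Tmax) (hX : Xmin <= Xmax)
    (hTd : compact Td) (hTdT : Td `<=` `[0, Tmax])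
    (hTa : compact Ta) (hTaT : Ta `<=` `[0, Tmax])
    (m : probability (R2 R) R) (hm : prob_on (`[Xmin, Xmax] `*` Ta) m)
    (G : R) (hG : 0 < G) :
  weakly_closed (Td `*` `[Xmin, Xmax]) (PmG Td Ta `[Xmin, Xmax] m G).
Proof.
have compact_measurable (A : set R) : compact A -> measurable A.
  by move=> /(compact_closed (@Rhausdorff R)); exact: closed_measurable.
have mTd := compact_measurable _ hTd; have mTa := compact_measurable _ hTa.
have mX : measurable `[Xmin, Xmax]%classic := measurable_itv _.
have mK := measurableX mTd mX.
have l2K : (lambda2 (Td `*` `[Xmin, Xmax]%classic) < +oo)%E.
  apply: (lambda2_bounded_lty (a := 0) (b := Tmax) (c := Xmin) (d := Xmax) mK).
  exact: setSX.
split=> [F [] //|F FK FP]; split=> //; split.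
- apply: (weak_closure_density_bounded mK hG l2K _ FK FP).
  by move=> F' [_ []].
- apply: (weak_closure_marginal_agrees mTd mX mTa hm _ FK FP).
  by move=> F' [_ []].
Qed.
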